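(* Let $A=[a_{ij}]$ be the adjacency matrix of a strongly connected, aperiodic directed graph on $\mathcal X=\{1,\ldots,n\}$, and let $N\ge1$ be such that all entries of $A^N$ are positive. Let $\lambda_A$ be the spectral radius of $A$, $u,v$ positive vectors with $A^Tu=\lambda_Au$, $Av=\lambda_Av$, $\sum_iu_iv_i=1$, $\nu_{RB}(i)=u_iv_i$, $r_{ij}=\frac{v_j}{\lambda_Av_i}a_{ij}$, and $\mathfrak M_{\rm RB}(x_0,\ldots,x_N)=\nu_{RB}(x_0)r_{x_0x_1}\cdots r_{x_{N-1}x_N}$. Let $\mu_0$ be a measure on $\mathcal X$ with $\mu_0(x)>0$ for all $x$ and $\mathfrak M(x_0,\ldots,x_N)=\mu_0(x_0)a_{x_0x_1}\cdots a_{x_{N-1}x_N}$. Then $\mathfrak M_{\rm RB}$ is the solution of the problem of minimizing $\mathbb D(P\|\mathfrak M)$ over all probability distributions $P$ on $\mathcal X^{N+1}$ whose marginals at times $0$ and $N$ both equal $\nu_{RB}$.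
   Context: Relative entropy of a probability distribution $P$ with respect to a nonnegative measure $Q$ on a finite set: $\mathbb D(P\|Q)=\sum_x P(x)\log\frac{P(x)}{Q(x)}$ if $\mathrm{supp}(P)\subseteq\mathrm{supp}(Q)$ (with $0\log0=0$), and $+\infty$ otherwise. *)

From HB Require Import structures.
From mathcomp Require Import all_boot all_order all_algebra.
From mathcomp Require Import complex.
From mathcomp Require Import reals ereal exp.
Set Implicit Arguments. Unset Strict Implicit. Unset Printing Implicit Defensive.
Import Order.TTheory GRing.Theory Num.Theory.
Local Open Scope ring_scope.

Definition adjmx (R : realType) (n : nat) (e : rel 'I_n) : 'M[R]_n :=
  \matrix_(i, j) (e i j)%:R.

Definition strongly_connected (n : nat) (e : rel 'I_n) : Prop :=
  forall i j : 'I_n, connect e i j.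

(* Aperiodic: the gcd of the lengths of all closed walks is 1, i.e. the only
   common divisor of all closed walk lengths is 1. A closed walk of length
   size s from i is a path i :: s ending at i. *)
Definition aperiodic (n : nat) (e : rel 'I_n) : Prop :=
  forall d : nat,
    (forall (i : 'I_n) (s : seq 'I_n),
        0 < size s -> path e i s -> last i s = i -> d %| size s)%N ->
    d = 1%N.

Definition is_spectral_radius (R : realType) (n : nat) (A : 'M[R]_n) (lam : R)
  : Prop :=
  let Ac := map_mx (fun x : R => x%:C)%C A in
  (forall mu : R[i], eigenvalue Ac mu -> `|mu| <= lam%:C%C) /\
  (exists mu : R[i], eigenvalue Ac mu /\ `|mu| = lam%:C%C).

Definition relent (R : realType) (T : finType) (P Q : T -> R) : \bar R :=
  if [forall x, (P x != 0) ==> (Q x != 0)]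
  then (\sum_(x | P x != 0) P x * ln (P x / Q x))%:E
  else +oo%E.

Definition pathT (n N : nat) := {ffun 'I_N.+1 -> 'I_n}.

Definition is_prob (R : realType) (T : finType) (P : T -> R) : Prop :=
  (forall x, 0 <= P x) /\ \sum_x P x = 1.

Definition marginal (R : realType) (n N : nat) (P : pathT n N -> R)
  (k : 'I_N.+1) (x : 'I_n) : R :=
  \sum_(w : pathT n N | w k == x) P w.

Definition markov_measure (R : realType) (n N : nat) (mu0 : 'I_n -> R)
  (q : 'I_n -> 'I_n -> R) (w : pathT n N) : R :=
  mu0 (w ord0) * \prod_(k < N) q (w (inord k)) (w (inord k.+1)).

(* The Ruelle-Bowen chain is the Doob h-transform of the walk on the graph by
   the right Perron vector v: the transition probabilities
   r_ij = v_j a_ij / (lam v_i) telescope along a path, so that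
   M_RB(x) = M(x) f(x_0) v(x_N) with f(x) = u_x / (lam^N mu0(x)), a density
   that depends on the endpoints only.  Hence, for every P whose marginals at
   times 0 and N are nu_RB, D(P||M) = D(P||M_RB) + c with a constant c that
   only involves nu_RB, and Gibbs' inequality D(P||M_RB) >= 0, with equality
   exactly at P = M_RB, concludes. *)

From HB Require Import structures.
From mathcomp Require Import all_boot all_order all_algebra.
From mathcomp Require Import complex.
From mathcomp Require Import reals ereal exp.
From mathcomp Require Import ring lra.
Import Order.TTheory GRing.Theory Num.Theory.
Local Open Scope ring_scope.

Section LnInequalities.
Variable R : realType.

Lemma ln_leif_subr1 (y : R) : 0 < y -> ln y <= y - 1 ?= iff (y == 1).
Proof.
move=> y_gt0; split.
  by have := @le_ln1Dx R (y - 1); rewrite [1 + _]addrC subrK; apply; lra.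
have [->|y_neq1] := eqVneq y 1; first by rewrite ln1 subrr eqxx.
have ln_neq0 : ln y != 0.
  apply: contra y_neq1 => /eqP ly0.
  by apply/eqP/ln_inj; rewrite ?posrE ?ly0 ?ln1.
have := expR_gt1Dx ln_neq0; rewrite lnK ?posrE // => lt_y.
by apply/negbTE; rewrite neq_lt; apply/orP; left; lra.
Qed.

(* [p ln (p/q) - (p - q) = p (y - 1 - ln y)] with [y = q/p]. *)
Lemma subr_leif_mulr_ln (p q : R) : 0 < p -> 0 < q ->
  p - q <= p * ln (p / q) ?= iff (p == q).
Proof.
move=> p_gt0 q_gt0; have qp_gt0 : 0 < q / p by exact: divr_gt0.
have [le_ln eq_ln] := ln_leif_subr1 (q / p) qp_gt0.
have -> : p * ln (p / q) = p - q + p * (q / p - 1 - ln (q / p)).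
  rewrite -invf_div lnV ?posrE //; field; exact: lt0r_neq0.
split.
  by rewrite lerDl; apply: mulr_ge0; [exact: ltW | rewrite subr_ge0].
rewrite eq_sym -subr_eq0 [_ + p * _]addrC addrK mulf_eq0 (gt_eqF p_gt0) /=.
rewrite subr_eq0 eq_sym eq_ln.
by apply/eqP/eqP => [/divr1_eq ->|->]; rewrite ?divff ?gt_eqF.
Qed.

End LnInequalities.

Section RelativeEntropy.
Context {R : realType} {T : finType}.
Implicit Types P Q M h : T -> R.

Lemma relent_self P : relent P P = 0%E.
Proof.
rewrite /relent; have -> : [forall x, (P x != 0) ==> (P x != 0)].
  by apply/forallP => x; exact/implyP.
by rewrite big1 // => x Px; rewrite divff // ln1 mulr0.
Qed.

Lemma relentM {P M Q h} : (forall x, 0 <= P x) -> (forall x, 0 <= M x) ->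
  (forall x, 0 < h x) -> (forall x, Q x = M x * h x) ->
  relent P M = (relent P Q + (\sum_x P x * ln (h x))%:E)%E.
Proof.
move=> P_ge0 M_ge0 h_gt0 QE; rewrite /relent.
have suppE x : (Q x != 0) = (M x != 0).
  by rewrite QE mulf_eq0 (gt_eqF (h_gt0 x)) orbF.
under [in RHS]eq_forallb do rewrite suppE.
case: ifP => [/forallP supp|_]; last by rewrite addye.
rewrite -EFinD; congr EFin.
rewrite [X in _ = _ + X](bigID (fun x => P x != 0)) /=.
rewrite [X in _ = _ + (_ + X)]big1 ?addr0 => [|x /negPn/eqP ->]; last first.
  by rewrite mul0r.
rewrite -big_split; apply: eq_bigr => x Px /=.
have P_gt0 : 0 < P x by rewrite lt_def Px P_ge0.
have M_gt0 : 0 < M x by rewrite lt_def (implyP (supp x) Px) M_ge0.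
have hx := h_gt0 x.
rewrite QE -mulrDr -lnM ?posrE ?divr_gt0 ?mulr_gt0 //; congr (_ * ln _).
by field; rewrite !gt_eqF.
Qed.

Section Gibbs.
Context {P Q : T -> R}.
Hypotheses (P_prob : is_prob P) (Q_prob : is_prob Q).

Let gibbs_leif : (forall x, P x != 0 -> Q x != 0) ->
  1 - \sum_(x | P x != 0) Q x <= \sum_(x | P x != 0) P x * ln (P x / Q x)
    ?= iff [forall (x | P x != 0), P x == Q x].
Proof.
move: P_prob Q_prob => [P_ge0 P1] [Q_ge0 _] supp.
have -> : 1 = \sum_(x | P x != 0) P x.
  rewrite -P1 [LHS](bigID (fun x => P x != 0)) /=.
  by rewrite [X in _ + X = _]big1 ?addr0 // => x /negPn/eqP.
rewrite -sumrB; apply: leif_sum => x Px; apply: subr_leif_mulr_ln.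
  by rewrite lt_def Px P_ge0.
by rewrite lt_def supp ?Q_ge0.
Qed.

Let sum_supp_split : \sum_(x | P x != 0) Q x + \sum_(x | P x == 0) Q x = 1.
Proof.
case: Q_prob => _ <-; rewrite [RHS](bigID (fun x => P x != 0)) /=.
by under [X in _ = _ + X]eq_bigl do rewrite negbK.
Qed.

Lemma relent_ge0 : (0 <= relent P Q)%E.
Proof.
rewrite /relent; case: ifP => [/forallP supp|_]; last by rewrite leey.
have [le_gibbs _] := gibbs_leif (fun x => implyP (supp x)).
rewrite lee_fin (le_trans _ le_gibbs) // -sum_supp_split addrC addKr.
by apply: sumr_ge0 => x _; case: Q_prob.
Qed.

Lemma relent_le0_eq : (relent P Q <= 0)%E -> P =1 Q.
Proof.
rewrite /relent; case: ifP => [/forallP supp|_]; last by rewrite leye_eq.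
rewrite lee_fin => D_le0.
have [Q_ge0 _] := Q_prob.
have [le_gibbs eq_gibbs] := gibbs_leif (fun x => implyP (supp x)).
have off_ge0 : 0 <= \sum_(x | P x == 0) Q x by exact: sumr_ge0.
have off_eq0 : \sum_(x | P x == 0) Q x = 0.
  by move: sum_supp_split le_gibbs; lra.
have /eqP : 1 - \sum_(x | P x != 0) Q x
    = \sum_(x | P x != 0) P x * ln (P x / Q x).
  by move: sum_supp_split le_gibbs; lra.
rewrite eq_gibbs => /forall_inP onS x.
have [Px0|Px] := eqVneq (P x) 0; last by apply/eqP/onS.
by rewrite Px0 (psumr_eq0P (fun y _ => Q_ge0 y) off_eq0) //; apply/eqP.
Qed.

End Gibbs.
End RelativeEntropy.

Section MarkovPaths.
Context {R : realType} {n : nat}.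
Implicit Types (q : 'I_n -> 'I_n -> R) (mu g : 'I_n -> R).

Definition markov_op q g x : R := \sum_y q x y * g y.

Definition pcons {N} (x : 'I_n) (w : pathT n N) : pathT n N.+1 :=
  [ffun k => if unlift ord0 k is Some k' then w k' else x].

Lemma pcons0 N x (w : pathT n N) : pcons x w ord0 = x.
Proof. by rewrite ffunE unlift_none. Qed.

Lemma pcons_lift N x (w : pathT n N) k : pcons x w (lift ord0 k) = w k.
Proof. by rewrite ffunE liftK. Qed.

Lemma pcons_max N x (w : pathT n N) : pcons x w ord_max = w ord_max.
Proof.
have -> : ord_max = lift ord0 (ord_max : 'I_N.+1) by apply: val_inj.
exact: pcons_lift.
Qed.

Lemma pcons_inordS N x (w : pathT n N) k : (k <= N)%N ->
  pcons x w (inord k.+1) = w (inord k).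
Proof.
move=> le_kN; have -> : inord k.+1 = lift ord0 (inord k : 'I_N.+1).
  by apply: val_inj; rewrite /= /bump leq0n !inordK.
exact: pcons_lift.
Qed.

Lemma pcons_bij N : bijective (fun p : 'I_n * pathT n N => pcons p.1 p.2).
Proof.
exists (fun w : pathT n N.+1 =>
  (w ord0, [ffun k => w (lift ord0 k)] : pathT n N)).
  move=> [x w] /=; rewrite pcons0; congr (_, _).
  by apply/ffunP => k; rewrite ffunE pcons_lift.
move=> w; apply/ffunP => k; rewrite ffunE.
by case: unliftP => [j ->|->]; rewrite ?ffunE.
Qed.

Lemma markov_measure_cons N mu q x (w : pathT n N) :
  markov_measure mu q (pcons x w) = markov_measure (fun y => mu x * q x y) q w.
Proof.
have inord0 m : (inord 0 : 'I_m.+1) = ord0 by apply: val_inj; rewrite /= inordK.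
rewrite /markov_measure big_ord_recl pcons0 mulrA; congr (_ * _).
  by rewrite /= inord0 pcons0 pcons_inordS // inord0.
apply: eq_bigr => k _; rewrite !lift0 !pcons_inordS //.
exact: ltnW.
Qed.

Lemma sum_markov_measure N mu q g :
  \sum_(w : pathT n N) markov_measure mu q w * g (w ord_max)
    = \sum_x mu x * iter N (markov_op q) g x.
Proof.
elim: N mu => [|N IH] mu.
  rewrite (reindex (fun x => [ffun=> x] : pathT n 0)) /=; last first.
    exists (fun w => w ord0) => [x _|w _]; first by rewrite ffunE.
    by apply/ffunP => k; rewrite ffunE (ord1 k).
  by apply: eq_bigr => x _; rewrite /markov_measure big_ord0 !ffunE mulr1.
rewrite (reindex _ (onW_bij _ (pcons_bij N))) /=.
rewrite -(pair_bigA _ (fun x w =>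
  markov_measure mu q (pcons x w) * g (pcons x w ord_max))) /=.
apply: eq_bigr => x _.
under eq_bigr do rewrite markov_measure_cons pcons_max.
rewrite IH /markov_op mulr_sumr; apply: eq_bigr => y _.
by rewrite mulrA.
Qed.

Lemma iter_markov_op1 q m : (forall x, \sum_y q x y = 1) ->
  forall x, iter m (markov_op q) (fun=> 1) x = 1.
Proof.
move=> q_stoch; elim: m => //= m IH x; rewrite /markov_op.
by under eq_bigr do rewrite IH mulr1.
Qed.

Lemma sum_iter_markov_op mu q m g : (forall y, \sum_x mu x * q x y = mu y) ->
  \sum_x mu x * iter m (markov_op q) g x = \sum_x mu x * g x.
Proof.
move=> mu_stat; elim: m g => // m IH g; rewrite iterSr IH /markov_op.
under eq_bigr do rewrite mulr_sumr.
rewrite exchange_big; apply: eq_bigr => y _.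
by rewrite -[in RHS]mu_stat mulr_suml; apply: eq_bigr => x _; rewrite mulrA.
Qed.

Lemma sum_mulr_indicator (f : 'I_n -> R) x : \sum_y f y * (y == x)%:R = f x.
Proof.
rewrite (bigD1 x) //= eqxx mulr1 big1 ?addr0 // => y /negbTE ->.
by rewrite mulr0.
Qed.

Lemma sum_mul_marginal N (P : pathT n N -> R) k g :
  \sum_w P w * g (w k) = \sum_x marginal P k x * g x.
Proof.
rewrite (partition_big (fun w : pathT n N => w k) xpredT) //=.
apply: eq_bigr => x _; rewrite /marginal mulr_suml.
by apply: eq_bigr => w /eqP ->.
Qed.

Lemma marginalE N (P : pathT n N -> R) k x :
  marginal P k x = \sum_w P w * (w k == x)%:R.
Proof.
by rewrite (sum_mul_marginal _ _ _ (fun y => (y == x)%:R)) sum_mulr_indicator.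
Qed.

Lemma markov_measure_marginal0 N mu q : (forall x, \sum_y q x y = 1) ->
  marginal (markov_measure (N := N) mu q) ord0 =1 mu.
Proof.
move=> q_stoch x; rewrite marginalE.
transitivity (\sum_(w : pathT n N)
    markov_measure (fun y => mu y * (y == x)%:R) q w * (fun=> 1) (w ord_max)).
  by apply: eq_bigr => w _; rewrite /markov_measure mulr1 mulrAC.
rewrite (sum_markov_measure _ _ _ (fun=> 1)) -[RHS](sum_mulr_indicator mu).
by apply: eq_bigr => y _; rewrite iter_markov_op1 // mulr1.
Qed.

Lemma markov_measure_marginal_max N mu q :
  (forall y, \sum_x mu x * q x y = mu y) ->
  marginal (markov_measure (N := N) mu q) ord_max =1 mu.
Proof.
move=> mu_stat x; rewrite marginalE.
rewrite (sum_markov_measure _ _ _ (fun y => (y == x)%:R)).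
by rewrite sum_iter_markov_op // sum_mulr_indicator.
Qed.

Lemma markov_measure_ge0 N mu q : (forall x, 0 <= mu x) ->
  (forall x y, 0 <= q x y) -> forall w : pathT n N, 0 <= markov_measure mu q w.
Proof. by move=> mu_ge0 q_ge0 w; rewrite mulr_ge0 // prodr_ge0. Qed.

Lemma markov_measure_prob N mu q :
  (forall x, 0 <= mu x) -> (forall x y, 0 <= q x y) ->
  (forall x, \sum_y q x y = 1) -> \sum_x mu x = 1 ->
  is_prob (markov_measure (N := N) mu q).
Proof.
move=> mu_ge0 q_ge0 q_stoch mu1; split; first exact: markov_measure_ge0.
rewrite -mu1 -(eq_bigr _ (fun w _ => mulr1 _)).
rewrite (sum_mul_marginal _ _ ord0 (fun=> 1)).
by apply: eq_bigr => x _; rewrite mulr1 markov_measure_marginal0.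
Qed.

Lemma sum_mul_ln_endpoints {N} {P : pathT n N -> R} {nu0 nuN f g} :
  marginal P ord0 =1 nu0 -> marginal P ord_max =1 nuN ->
  (forall x, 0 < f x) -> (forall x, 0 < g x) ->
  \sum_w P w * ln (f (w ord0) * g (w ord_max))
    = \sum_x nu0 x * ln (f x) + \sum_x nuN x * ln (g x).
Proof.
move=> P0 PN f_gt0 g_gt0.
under eq_bigr do rewrite lnM ?posrE // mulrDr.
rewrite big_split /= (sum_mul_marginal _ _ _ (fun x => ln (f x))).
rewrite (sum_mul_marginal _ _ _ (fun x => ln (g x))).
by congr (_ + _); apply: eq_bigr => x _; rewrite ?P0 ?PN.
Qed.

End MarkovPaths.

Lemma prod_htransform {R : realType} {T : Type} (a : T -> T -> R) (v : T -> R)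
    (lam : R) (x : nat -> T) m :
  lam != 0 -> (forall t, v t != 0) ->
  \prod_(k < m) (v (x k.+1) / (lam * v (x k)) * a (x k) (x k.+1))
    = v (x m) / (lam ^+ m * v (x 0)) * \prod_(k < m) a (x k) (x k.+1).
Proof.
move=> lam_neq0 v_neq0; elim: m => [|m IH].
  by rewrite !big_ord0 expr0 mul1r divff ?mulr1.
rewrite !big_ord_recr /= IH exprS; field.
by rewrite expf_neq0 // lam_neq0 !v_neq0.
Qed.

Lemma eigenvalue_gt0 {R : realType} {n} {a : 'I_n -> 'I_n -> R} {v lam i j} :
  (forall i j, 0 <= a i j) -> (forall i, 0 < v i) ->
  (forall i, \sum_j a i j * v j = lam * v i) -> 0 < a i j -> 0 < lam.
Proof.
move=> a_ge0 v_gt0 Av aij_gt0; rewrite -(pmulr_lgt0 _ (v_gt0 i)) -Av.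
apply: lt_le_trans (mulr_gt0 aij_gt0 (v_gt0 j)) _.
rewrite (bigD1 j) //= lerDl sumr_ge0 // => k _.
exact: mulr_ge0 (a_ge0 i k) (ltW (v_gt0 k)).
Qed.

Lemma expr_gt0_row {R : realType} {n} {A : 'M[R]_n} {N i j} :
  (forall i j, 0 <= A i j) -> (0 < N)%N -> 0 < (A ^+ N) i j ->
  exists k, 0 < A i k.
Proof.
move=> A_ge0; case: N => // N _; rewrite exprS -mulmxE mxE.
case: (pickP (fun k => 0 < A i k)) => [k Aik _|no_pos]; first by exists k.
rewrite big1 ?ltxx // => k _.
have := no_pos k; rewrite lt_def A_ge0 andbT => /negbFE/eqP ->.
by rewrite mul0r.
Qed.

Section RuelleBowenChain.
Context {R : realType} {n : nat} {a : 'I_n -> 'I_n -> R} {lam : R}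
  {u v : 'I_n -> R}.
Hypotheses (a_ge0 : forall i j, 0 <= a i j) (lam_gt0 : 0 < lam)
  (v_gt0 : forall i, 0 < v i)
  (uA : forall i, \sum_j a j i * u j = lam * u i)
  (Av : forall i, \sum_j a i j * v j = lam * v i).

Let nu i := u i * v i.
Let r i j := v j / (lam * v i) * a i j.

Lemma rb_kernel_ge0 i j : 0 <= r i j.
Proof. by rewrite mulr_ge0 // divr_ge0 ?ltW ?mulr_gt0. Qed.

Lemma rb_kernel_stochastic i : \sum_j r i j = 1.
Proof.
have vi_neq0 := gt_eqF (v_gt0 i).
transitivity ((\sum_j a i j * v j) / (lam * v i)).
  rewrite mulr_suml; apply: eq_bigr => j _; rewrite /r; field.
  by rewrite vi_neq0 (gt_eqF lam_gt0).
by rewrite (Av i) divff // mulf_neq0 ?gt_eqF.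
Qed.

Lemma rb_measure_stationary j : \sum_i nu i * r i j = nu j.
Proof.
transitivity (v j / lam * \sum_i a i j * u i).
  rewrite mulr_sumr; apply: eq_bigr => i _; rewrite /nu /r.
  by field; rewrite !gt_eqF.
by rewrite uA /nu; field; rewrite gt_eqF.
Qed.

Lemma rb_markov_measureE {N} {mu0 : 'I_n -> R} :
  (forall x, 0 < mu0 x) -> forall w : pathT n N,
  markov_measure nu r w = markov_measure mu0 a w *
    (u (w ord0) / (lam ^+ N * mu0 (w ord0)) * v (w ord_max)).
Proof.
move=> mu0_gt0 w; have inord0 : (inord 0 : 'I_N.+1) = ord0.
  by apply: val_inj; rewrite /= inordK.
have inordN : (inord N : 'I_N.+1) = ord_max.
  by apply: val_inj; rewrite /= inordK.
rewrite /markov_measure /nu /r.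
rewrite (prod_htransform a v lam (fun k => w (inord k)) N (lt0r_neq0 lam_gt0));
  last by move=> t; exact: lt0r_neq0.
by rewrite inord0 inordN; field; rewrite !gt_eqF ?exprn_gt0.
Qed.

End RuelleBowenChain.

Theorem proposition4p2 (R : realType) (n : nat) (e : rel 'I_n) (N : nat)
  (lam : R) (u v : 'I_n -> R) (mu0 : 'I_n -> R) :
  strongly_connected e ->
  aperiodic e ->
  (1 <= N)%N ->
  (forall i j, 0 < (adjmx R e ^+ N) i j) ->
  is_spectral_radius (adjmx R e) lam ->
  (forall i, 0 < u i) -> (forall i, 0 < v i) ->
  (forall i, \sum_j adjmx R e j i * u j = lam * u i) ->
  (forall i, \sum_j adjmx R e i j * v j = lam * v i) ->
  \sum_i u i * v i = 1 ->
  (forall x, 0 < mu0 x) ->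
  let nuRB := fun i => u i * v i in
  let r := fun i j => v j / (lam * v i) * adjmx R e i j in
  let MRB := markov_measure (N := N) nuRB r in
  let M := markov_measure (N := N) mu0 (fun i j => adjmx R e i j) in
  let feasible := fun P : pathT n N -> R =>
    is_prob P /\ marginal P ord0 =1 nuRB /\ marginal P ord_max =1 nuRB in
  [/\ feasible MRB,
      (forall P, feasible P -> (relent MRB M <= relent P M)%E)
    & (forall P, feasible P -> (relent P M <= relent MRB M)%E -> P =1 MRB)].
Proof.
move=> _ _ N_gt0 AN_gt0 _ u_gt0 v_gt0 uA Av uv1 mu0_gt0 nuRB r MRB M feasible.
have a_ge0 i j : 0 <= adjmx R e i j by rewrite mxE ler0n.
have lam_gt0 : 0 < lam.
  have [i0 _] : exists i0 : 'I_n, true.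
    case: (pickP (@predT 'I_n)) => [i0 _|no_vertex]; first by exists i0.
    move: uv1; rewrite big1 => [/eqP|i]; last by have := no_vertex i.
    by rewrite eq_sym oner_eq0.
  have [j Aij] := expr_gt0_row a_ge0 N_gt0 (AN_gt0 i0 i0).
  exact: eigenvalue_gt0 a_ge0 v_gt0 Av Aij.
have nuRB_ge0 x : 0 <= nuRB x by rewrite mulr_ge0 ?ltW.
have MRB_feasible : feasible MRB.
  split; last split.
  - apply: markov_measure_prob uv1 => //.
      exact: rb_kernel_ge0 a_ge0 lam_gt0 v_gt0.
    exact: rb_kernel_stochastic lam_gt0 v_gt0 Av.
  - apply: markov_measure_marginal0.
    exact: rb_kernel_stochastic lam_gt0 v_gt0 Av.
  - apply: markov_measure_marginal_max.
    exact: rb_measure_stationary lam_gt0 v_gt0 uA.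
have f_gt0 x : 0 < u x / (lam ^+ N * mu0 x).
  by rewrite divr_gt0 ?mulr_gt0 ?exprn_gt0.
pose h (w : pathT n N) :=
  u (w ord0) / (lam ^+ N * mu0 (w ord0)) * v (w ord_max).
have MRBE w : MRB w = M w * h w := rb_markov_measureE lam_gt0 v_gt0 mu0_gt0 w.
have M_ge0 w : 0 <= M w.
  by apply: markov_measure_ge0 => // x; exact: ltW.
have [c relentE] : exists c, forall P, feasible P ->
    relent P M = (relent P MRB + c%:E)%E.
  eexists => P [[P_ge0 _] [P0 PN]].
  rewrite (relentM P_ge0 M_ge0 _ MRBE) => [|w]; last by rewrite mulr_gt0.
  by rewrite (sum_mul_ln_endpoints P0 PN f_gt0 v_gt0).
split => // P [P_prob P_marg]; rewrite !relentE // relent_self.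
  by rewrite add0e leeDr // relent_ge0 //; case: MRB_feasible.
by rewrite leeD2rE // => /relent_le0_eq; apply => //; case: MRB_feasible.
Qed.
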